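(* Let $\alpha>0$ with $\alpha\neq1$. There is a constant $C=C(\alpha)$ such that for every $R>0$, every $b\in\mathbb{R}$, and each choice of sign $\pm$, $$\Big|\int_0^R e^{i(b e^{x}\pm e^{\alpha x})}\,dx\Big|\le C.$$ *)

From Stdlib Require Import Reals.
From Coquelicot Require Export Coquelicot.
Open Scope R_scope.

Definition cis (t : R) : C := (cos t, sin t).

From Stdlib Require Import Reals Lra.
From Coquelicot Require Import Coquelicot.
Open Scope R_scope.

(* After possibly negating the phase, the real and imaginary parts of the
   integral are integrals of [cos phi] with [phi x = b e^x + m e^(al x) + th] and
   [K = m al (al - 1) > 0]. Then [phi'' - phi' = K e^(al x) >= K] on [x >= 0],
   and [phi'], [phi''] change sign at most once, being [e^x] times monotone
   functions. Cut [[0, R]] at the sign change [x3] of [phi''] and [x0] of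
   [phi']: van der Corput's first-derivative test applies on [[0, min x3 x0]]
   (there [phi' <= phi'' - K <= -K]), on [[x3, x0 - 1]] (there [phi' <= -K/2])
   and on [[x0 + 1, R]] (there [phi' >= K]), while the two unit intervals
   around [x0] contribute at most [1] each. Hence [16 / K + 2] bounds the
   integral uniformly in [b], [R] and [th]. *)

Lemma Rabs_div_le_inv u y lam :
  0 < lam -> lam <= Rabs y -> Rabs u <= 1 -> Rabs (u / y) <= / lam.
Proof.
  intros Hlam Hy Hu.
  unfold Rdiv; rewrite Rabs_mult, Rabs_inv.
  apply Rle_trans with (1 * / Rabs y).
  - apply Rmult_le_compat_r; [left; apply Rinv_0_lt_compat|]; lra.
  - rewrite Rmult_1_l; apply Rinv_le_contravar; lra.
Qed.

Lemma ex_RInt_continuous_on (g : R -> R) a c :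
  a <= c -> (forall x, a <= x <= c -> continuous g x) -> ex_RInt g a c.
Proof.
  intros Hac Hg; apply (ex_RInt_continuous (V := R_CompleteNormedModule)).
  rewrite Rmin_left, Rmax_right by lra; exact Hg.
Qed.

Lemma abs_RInt_mul_le_of_nonneg (u h : R -> R) a c :
  a <= c ->
  (forall x, a <= x <= c -> continuous u x) ->
  (forall x, a <= x <= c -> continuous h x) ->
  (forall x, a <= x <= c -> Rabs (u x) <= 1) ->
  (forall x, a <= x <= c -> 0 <= h x) ->
  Rabs (RInt (fun x => u x * h x) a c) <= Rabs (RInt h a c).
Proof.
  intros Hac Hu Hh Hu1 Hh0.
  assert (Huh : forall x, a <= x <= c -> continuous (fun x => u x * h x) x)
    by (intros; apply (continuous_mult u h); auto).
  rewrite (Rabs_pos_eq (RInt h a c))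
    by (apply RInt_ge_0; [lra | apply ex_RInt_continuous_on; auto | intros; apply Hh0; lra]).
  eapply Rle_trans; [apply abs_RInt_le; [lra | apply ex_RInt_continuous_on; auto]|].
  apply RInt_le; [lra | | apply ex_RInt_continuous_on; auto |].
  - apply ex_RInt_continuous_on; [lra|].
    intros; apply (continuous_comp _ Rabs); [auto | apply continuous_Rabs].
  - intros x Hx. rewrite Rabs_mult, (Rabs_pos_eq (h x)) by (apply Hh0; lra).
    rewrite <- (Rmult_1_l (h x)) at 2.
    apply Rmult_le_compat_r; [apply Hh0 | apply Hu1]; lra.
Qed.

Lemma abs_RInt_mul_le_of_const_sign (u h : R -> R) a c :
  a <= c ->
  (forall x, a <= x <= c -> continuous u x) ->
  (forall x, a <= x <= c -> continuous h x) ->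
  (forall x, a <= x <= c -> Rabs (u x) <= 1) ->
  (forall x, a <= x <= c -> 0 <= h x) \/ (forall x, a <= x <= c -> h x <= 0) ->
  Rabs (RInt (fun x => u x * h x) a c) <= Rabs (RInt h a c).
Proof.
  intros Hac Hu Hh Hu1 [Hh0 | Hh0]; [apply abs_RInt_mul_le_of_nonneg; auto|].
  assert (Hh' : forall x, a <= x <= c -> continuous (fun x => opp (h x)) x)
    by (intros; apply (continuous_opp (V := R_NormedModule)); auto).
  rewrite <- (Rabs_Ropp (RInt h a c)), <- (Rabs_Ropp (RInt _ a c)).
  change (- RInt h a c) with (opp (RInt h a c)).
  change (- RInt (fun x => u x * h x) a c) with (opp (RInt (fun x => u x * h x) a c)).
  rewrite <- !RInt_opp by (apply ex_RInt_continuous_on; auto; intros; try apply (continuous_mult u h); auto).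
  rewrite (RInt_ext (fun x => opp (u x * h x)) (fun x => u x * opp (h x)))
    by (intros; unfold opp; simpl; ring).
  apply abs_RInt_mul_le_of_nonneg; auto.
  intros x Hx; unfold opp; simpl; specialize (Hh0 x Hx); lra.
Qed.

(* The guards let [z = a] serve when [f > 0] throughout, and [z = c] when
   [f < 0] throughout. *)
Definition sign_change_at (f : R -> R) (a c z : R) : Prop :=
  a <= z <= c /\
  (a < z -> forall x, a <= x <= z -> f x <= 0) /\
  (z < c -> forall x, z <= x <= c -> 0 <= f x).

Section Phase.

Variables phi dphi ddphi : R -> R.
Hypothesis phi_derive : forall x, is_derive phi x (dphi x).
Hypothesis dphi_derive : forall x, is_derive dphi x (ddphi x).
Hypothesis ddphi_continuous : forall x, continuous ddphi x.

Lemma dphi_continuous x : continuous dphi x.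
Proof. apply (ex_derive_continuous (K := R_AbsRing) (V := R_NormedModule)); eexists; apply dphi_derive. Qed.

Lemma cos_phase_continuous x : continuous (fun t => cos (phi t)) x.
Proof.
  apply (ex_derive_continuous (K := R_AbsRing) (V := R_NormedModule)); eexists.
  apply (is_derive_comp cos phi); [apply is_derive_cos | apply phi_derive].
Qed.

Lemma ex_RInt_cos_phase a c : ex_RInt (fun t => cos (phi t)) a c.
Proof. apply (ex_RInt_continuous (V := R_CompleteNormedModule)); intros; apply cos_phase_continuous. Qed.

Lemma abs_RInt_cos_phase_le_length a c :
  a <= c -> Rabs (RInt (fun t => cos (phi t)) a c) <= c - a.
Proof.
  intros Hac; rewrite <- (Rmult_1_r (c - a)).
  apply abs_RInt_le_const; [exact Hac | apply ex_RInt_cos_phase |].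
  intros; apply Rabs_le, COS_bound.
Qed.

Lemma abs_RInt_cos_phase_split_le a p c B1 B2 :
  Rabs (RInt (fun t => cos (phi t)) a p) <= B1 ->
  Rabs (RInt (fun t => cos (phi t)) p c) <= B2 ->
  Rabs (RInt (fun t => cos (phi t)) a c) <= B1 + B2.
Proof.
  intros H1 H2.
  rewrite <- (RInt_Chasles _ a p c) by apply ex_RInt_cos_phase.
  eapply Rle_trans; [apply Rabs_triang | lra].
Qed.

Lemma abs_RInt_cos_phase_le_of_lt a c B :
  a <= c -> 0 <= B ->
  (a < c -> Rabs (RInt (fun t => cos (phi t)) a c) <= B) ->
  Rabs (RInt (fun t => cos (phi t)) a c) <= B.
Proof.
  intros [Hlt | ->] HB Hbound; [auto|].
  rewrite RInt_point; unfold zero; simpl; rewrite Rabs_R0; exact HB.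
Qed.

Lemma sin_phase_continuous x : continuous (fun t => sin (phi t)) x.
Proof.
  apply (ex_derive_continuous (K := R_AbsRing) (V := R_NormedModule)); eexists.
  apply (is_derive_comp sin phi); [apply is_derive_sin | apply phi_derive].
Qed.

Lemma ddphi_div_dphi_sq_continuous x :
  dphi x <> 0 -> continuous (fun t => ddphi t / (dphi t * dphi t)) x.
Proof.
  intros Hx; apply (continuous_mult (K := R_AbsRing)); [auto|].
  apply continuous_Rinv_comp; [| apply Rmult_integral_contrapositive; auto].
  apply (continuous_mult (K := R_AbsRing)); apply dphi_continuous.
Qed.

Lemma RInt_ddphi_div_dphi_sq a c :
  a <= c -> (forall x, a <= x <= c -> dphi x <> 0) ->
  RInt (fun t => ddphi t / (dphi t * dphi t)) a c = / dphi a - / dphi c.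
Proof.
  intros Hac Hnz; apply (is_RInt_unique (V := R_CompleteNormedModule)).
  replace (/ dphi a - / dphi c) with (minus (- / dphi c) (- / dphi a))
    by (unfold minus, plus, opp; simpl; ring).
  apply (is_RInt_derive (fun x => - / dphi x)); rewrite Rmin_left, Rmax_right by lra.
  - intros x Hx; evar_last.
    + apply (is_derive_opp (fun x => / dphi x)), (is_derive_inv dphi); auto.
    + unfold opp; simpl; field; auto.
  - intros; apply ddphi_div_dphi_sq_continuous; auto.
Qed.

Lemma RInt_cos_phase_by_parts a c :
  a <= c -> (forall x, a <= x <= c -> dphi x <> 0) ->
  RInt (fun t => cos (phi t)) a c
  = (sin (phi c) / dphi c - sin (phi a) / dphi a)
    + RInt (fun t => sin (phi t) * (ddphi t / (dphi t * dphi t))) a c.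
Proof.
  intros Hac Hnz.
  set (h := fun t => ddphi t / (dphi t * dphi t)).
  assert (Hsinh : forall x, a <= x <= c -> continuous (fun t => sin (phi t) * h t) x)
    by (intros; apply (continuous_mult (K := R_AbsRing));
        [apply sin_phase_continuous | apply ddphi_div_dphi_sq_continuous; auto]).
  assert (Hparts : is_RInt (fun x => cos (phi x) - sin (phi x) * h x) a c
                     (sin (phi c) / dphi c - sin (phi a) / dphi a)).
  { apply (is_RInt_derive (fun x => sin (phi x) / dphi x)); rewrite Rmin_left, Rmax_right by lra.
    - intros x Hx; evar_last.
      + apply (is_derive_div (fun x => sin (phi x))); [| apply dphi_derive | auto].
        apply (is_derive_comp sin phi); [apply is_derive_sin | apply phi_derive].
      + unfold h, scal; simpl; unfold mult; simpl; field; auto.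
    - intros; apply (continuous_minus (V := R_NormedModule)); [apply cos_phase_continuous | auto]. }
  apply (is_RInt_unique (V := R_CompleteNormedModule)).
  apply (is_RInt_ext (V := R_NormedModule)
           (fun x => plus (cos (phi x) - sin (phi x) * h x) (sin (phi x) * h x)));
    [intros; unfold plus; simpl; ring|].
  apply (is_RInt_plus _ _ _ _ _ _ Hparts), (RInt_correct (V := R_CompleteNormedModule)).
  apply ex_RInt_continuous_on; auto.
Qed.

(* Van der Corput's first-derivative test. After integrating by parts, the
   remainder is controlled by [| / dphi a - / dphi c |] because [ddphi] has
   constant sign. *)
Lemma abs_RInt_cos_phase_vdc a c lam :
  a <= c -> 0 < lam ->
  (forall x, a <= x <= c -> lam <= Rabs (dphi x)) ->
  (forall x, a <= x <= c -> 0 <= ddphi x) \/ (forall x, a <= x <= c -> ddphi x <= 0) ->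
  Rabs (RInt (fun t => cos (phi t)) a c) <= 4 / lam.
Proof.
  intros Hac Hlam Hdphi Hsign.
  assert (Hnz : forall x, a <= x <= c -> dphi x <> 0).
  { intros x Hx Hx0; specialize (Hdphi x Hx); rewrite Hx0, Rabs_R0 in Hdphi; lra. }
  assert (Hinv : forall x u, a <= x <= c -> Rabs u <= 1 -> Rabs (u / dphi x) <= / lam)
    by (intros; apply Rabs_div_le_inv; auto).
  assert (Hsin : forall x, Rabs (sin (phi x)) <= 1) by (intros; apply Rabs_le, SIN_bound).
  assert (Hrem : Rabs (RInt (fun t => sin (phi t) * (ddphi t / (dphi t * dphi t))) a c)
                 <= 2 / lam).
  { eapply Rle_trans; [apply abs_RInt_mul_le_of_const_sign; auto|].
    - intros; apply sin_phase_continuous.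
    - intros; apply ddphi_div_dphi_sq_continuous; auto.
    - assert (Hsq : forall x, a <= x <= c -> 0 <= / (dphi x * dphi x))
        by (intros x Hx; left; apply Rinv_0_lt_compat, Rsqr_pos_lt, Hnz, Hx).
      destruct Hsign as [Hs | Hs]; [left | right]; intros x Hx;
        specialize (Hs x Hx); specialize (Hsq x Hx); unfold Rdiv;
        [apply Rmult_le_pos | apply Rmult_le_0_r]; assumption.
    - rewrite RInt_ddphi_div_dphi_sq by assumption.
      assert (Rabs (1 / dphi a) <= / lam) by (apply Hinv; [lra | rewrite Rabs_R1; lra]).
      assert (Rabs (1 / dphi c) <= / lam) by (apply Hinv; [lra | rewrite Rabs_R1; lra]).
      unfold Rdiv in *; rewrite !Rmult_1_l in *.
      eapply Rle_trans; [apply Rabs_triang | rewrite Rabs_Ropp; lra]. }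
  assert (Rabs (sin (phi a) / dphi a) <= / lam) by (apply Hinv; [lra | apply Hsin]).
  assert (Rabs (sin (phi c) / dphi c) <= / lam) by (apply Hinv; [lra | apply Hsin]).
  rewrite RInt_cos_phase_by_parts by assumption.
  eapply Rle_trans; [apply Rabs_triang|].
  eapply Rle_trans; [apply Rplus_le_compat_r, Rabs_triang|].
  rewrite Rabs_Ropp; unfold Rdiv in *; lra.
Qed.

Lemma dphi_mvt x y :
  x < y -> exists xi, x < xi < y /\ dphi y - dphi x = ddphi xi * (y - x).
Proof.
  intros Hxy; destruct (MVT_cor2 dphi ddphi x y Hxy) as [xi [Heq Hxi]].
  - intros; apply is_derive_Reals, dphi_derive.
  - exists xi; auto.
Qed.

Variable K : R.
Hypothesis K_pos : 0 < K.
Hypothesis ddphi_ge_dphi : forall x, 0 <= x -> dphi x + K <= ddphi x.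

Lemma abs_RInt_cos_phase_concave c :
  0 <= c -> (forall x, 0 <= x <= c -> ddphi x <= 0) ->
  Rabs (RInt (fun t => cos (phi t)) 0 c) <= 4 / K.
Proof.
  intros Hc Hconc; apply abs_RInt_cos_phase_vdc; auto.
  intros x Hx; specialize (Hconc x Hx); specialize (ddphi_ge_dphi x (proj1 Hx)).
  rewrite Rabs_left1; lra.
Qed.

Lemma dphi_ge_past_zero x0 x :
  0 <= x0 -> x0 + 1 <= x -> (forall t, x0 <= t <= x -> 0 <= dphi t) -> K <= dphi x.
Proof.
  intros Hx0 Hx Hpos.
  destruct (dphi_mvt x0 x) as [xi [Hxi Heq]]; [lra|].
  assert (0 <= dphi xi) by (apply Hpos; lra).
  assert (dphi xi + K <= ddphi xi) by (apply ddphi_ge_dphi; lra).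
  assert (0 <= dphi x0) by (apply Hpos; lra).
  nra.
Qed.

Lemma abs_RInt_cos_phase_increasing x0 c :
  0 <= x0 -> x0 + 1 <= c -> (forall x, x0 <= x <= c -> 0 <= dphi x) ->
  Rabs (RInt (fun t => cos (phi t)) (x0 + 1) c) <= 4 / K.
Proof.
  intros Hx0 Hc Hpos.
  assert (HK : forall x, x0 + 1 <= x <= c -> K <= dphi x)
    by (intros x Hx; apply (dphi_ge_past_zero x0); [lra | lra | intros; apply Hpos; lra]).
  apply abs_RInt_cos_phase_vdc; auto.
  - intros x Hx; specialize (HK x Hx); rewrite Rabs_pos_eq; lra.
  - left; intros x Hx; specialize (HK x Hx).
    specialize (ddphi_ge_dphi x ltac:(lra)); lra.
Qed.

(* [dphi] increases on [[x, x0]], so [ddphi >= dphi x + K] there, and the mean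
   value theorem over a length [x0 - x >= 1] gives [0 >= dphi x0 >= 2 dphi x + K]
   unless already [dphi x <= - K]. *)
Lemma dphi_le_before_zero x3 x0 x :
  0 <= x3 <= x -> x + 1 <= x0 ->
  (forall t, x3 <= t <= x0 -> 0 <= ddphi t) -> dphi x0 <= 0 ->
  dphi x <= - (K / 2).
Proof.
  intros Hx Hx0 Hconv Hneg.
  destruct (dphi_mvt x x0) as [xi [Hxi Heq]]; [lra|].
  destruct (dphi_mvt x xi) as [eta [Heta Heq']]; [lra|].
  assert (0 <= ddphi eta) by (apply Hconv; lra).
  assert (dphi xi + K <= ddphi xi) by (apply ddphi_ge_dphi; lra).
  destruct (Rle_lt_dec (dphi x + K) 0) as [Hle | Hlt]; [lra|].
  assert ((dphi x + K) * 1 <= ddphi xi * (x0 - x)) by (apply Rmult_le_compat; nra).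
  lra.
Qed.

Lemma abs_RInt_cos_phase_convex_decreasing x3 x0 :
  0 <= x3 -> x3 + 1 <= x0 ->
  (forall t, x3 <= t <= x0 -> 0 <= ddphi t) -> dphi x0 <= 0 ->
  Rabs (RInt (fun t => cos (phi t)) x3 (x0 - 1)) <= 8 / K.
Proof.
  intros Hx3 Hx0 Hconv Hneg.
  replace (8 / K) with (4 / (K / 2)) by (field; lra).
  apply abs_RInt_cos_phase_vdc; [lra | lra | |].
  - intros x Hx; assert (dphi x <= - (K / 2)) by (apply (dphi_le_before_zero x3 x0); auto; lra).
    rewrite Rabs_left1; lra.
  - left; intros; apply Hconv; lra.
Qed.

Lemma abs_RInt_cos_phase_le Rr x0 x3 :
  0 < Rr -> sign_change_at dphi 0 Rr x0 -> sign_change_at ddphi 0 Rr x3 ->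
  Rabs (RInt (fun t => cos (phi t)) 0 Rr) <= 16 / K + 2.
Proof.
  intros HR [Hx0 [Hdphi_neg Hdphi_pos]] [Hx3 [Hddphi_neg Hddphi_pos]].
  set (p1 := Rmin x3 x0); set (p2 := Rmax p1 (x0 - 1)); set (p4 := Rmin (x0 + 1) Rr).
  assert (Hp1 : p1 <= x3 /\ p1 <= x0 /\ (p1 = x3 \/ p1 = x0))
    by (unfold p1, Rmin; destruct Rle_dec; lra).
  assert (Hp2 : p1 <= p2 /\ x0 - 1 <= p2 /\ (p2 = p1 \/ p2 = x0 - 1))
    by (unfold p2, Rmax; destruct Rle_dec; lra).
  assert (Hp4 : p4 <= x0 + 1 /\ p4 <= Rr /\ (p4 = x0 + 1 \/ p4 = Rr))
    by (unfold p4, Rmin; destruct Rle_dec; lra).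
  replace (16 / K + 2) with (4 / K + (8 / K + (1 + (1 + 4 / K)))) by (field; lra).
  assert (0 < / K) by (apply Rinv_0_lt_compat; lra).
  apply (abs_RInt_cos_phase_split_le _ p1);
    [| apply (abs_RInt_cos_phase_split_le _ p2);
    [| apply (abs_RInt_cos_phase_split_le _ x0);
    [| apply (abs_RInt_cos_phase_split_le _ p4)]]].
  - apply abs_RInt_cos_phase_le_of_lt; [lra | unfold Rdiv; lra | intros Hlt].
    apply abs_RInt_cos_phase_concave; [lra|].
    intros; apply Hddphi_neg; lra.
  - apply abs_RInt_cos_phase_le_of_lt; [lra | unfold Rdiv; lra | intros Hlt].
    replace p1 with x3 by lra; replace p2 with (x0 - 1) by lra.
    apply abs_RInt_cos_phase_convex_decreasing; [lra | lra | |].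
    + intros; apply Hddphi_pos; lra.
    + apply Hdphi_neg; lra.
  - eapply Rle_trans; [apply abs_RInt_cos_phase_le_length|]; lra.
  - eapply Rle_trans; [apply abs_RInt_cos_phase_le_length|]; lra.
  - apply abs_RInt_cos_phase_le_of_lt; [lra | unfold Rdiv; lra | intros Hlt].
    replace p4 with (x0 + 1) by lra.
    apply abs_RInt_cos_phase_increasing; [lra | lra |].
    intros; apply Hdphi_pos; lra.
Qed.

End Phase.

Lemma sign_change_at_nondecreasing (g : R -> R) a c :
  continuity g -> (forall x y, x <= y -> g x <= g y) -> a <= c ->
  exists z, sign_change_at g a c z.
Proof.
  intros Hcont Hmono Hac.
  destruct (Rle_lt_dec 0 (g a)) as [Ha | Ha].
  { exists a; repeat split; intros; try lra.
    apply Rle_trans with (g a); [exact Ha | apply Hmono; lra]. }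
  destruct (Rle_lt_dec (g c) 0) as [Hc | Hc].
  { exists c; repeat split; intros; try lra.
    apply Rle_trans with (g c); [apply Hmono; lra | exact Hc]. }
  assert (Hlt : a < c) by (destruct Hac as [| ->]; [assumption | lra]).
  destruct (IVT g a c Hcont Hlt Ha Hc) as [z [Hz Hgz]].
  exists z; repeat split; intros; try lra; rewrite <- Hgz; apply Hmono; lra.
Qed.

Lemma sign_change_at_pos_mul (f w g : R -> R) a c z :
  (forall x, f x = w x * g x) -> (forall x, 0 < w x) ->
  sign_change_at g a c z -> sign_change_at f a c z.
Proof.
  intros Hf Hw [Hz [Hneg Hpos]]; split; [exact Hz | split].
  - intros Haz x Hx; rewrite Hf; specialize (Hneg Haz x Hx); specialize (Hw x); nra.
  - intros Hzc x Hx; rewrite Hf; specialize (Hpos Hzc x Hx); specialize (Hw x); nra.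
Qed.

Lemma exp_le_compat x y : x <= y -> exp x <= exp y.
Proof. intros [Hlt | ->]; [left; apply exp_increasing; exact Hlt | lra]. Qed.

Lemma scaled_exp_nondecreasing q k x y :
  0 < q * k -> x <= y -> q * exp (k * x) <= q * exp (k * y).
Proof.
  intros Hqk Hxy.
  destruct (Rlt_or_le 0 k) as [Hk | Hk].
  - assert (0 < q) by nra.
    apply Rmult_le_compat_l; [lra|]; apply exp_le_compat; nra.
  - assert (k < 0) by (destruct Hk as [| ->]; [assumption | rewrite Rmult_0_r in Hqk; lra]).
    assert (q < 0) by nra.
    assert (exp (k * y) <= exp (k * x)) by (apply exp_le_compat; nra).
    nra.
Qed.

Lemma sign_change_at_exp_affine (f : R -> R) b q k a c :
  0 < q * k -> a <= c -> (forall x, f x = exp x * (b + q * exp (k * x))) ->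
  exists z, sign_change_at f a c z.
Proof.
  intros Hqk Hac Hf.
  assert (Hcont : continuity (fun x => b + q * exp (k * x))).
  { intros x; apply continuity_pt_filterlim.
    change (continuous (fun t => b + q * exp (k * t)) x).
    apply (ex_derive_continuous (K := R_AbsRing) (V := R_NormedModule)).
    auto_derive; auto. }
  assert (Hmono : forall x y, x <= y -> b + q * exp (k * x) <= b + q * exp (k * y))
    by (intros; apply Rplus_le_compat_l, scaled_exp_nondecreasing; assumption).
  destruct (sign_change_at_nondecreasing _ a c Hcont Hmono Hac) as [z Hz].
  exists z; apply (sign_change_at_pos_mul f exp _ a c z Hf exp_pos Hz).
Qed.

Lemma exp_mul_split al x : exp (al * x) = exp x * exp ((al - 1) * x).
Proof. rewrite <- exp_plus; f_equal; ring. Qed.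

Lemma abs_RInt_cos_exp_phase_le al b m th Rr :
  0 < al -> 0 < m * al * (al - 1) -> 0 < Rr ->
  Rabs (RInt (fun x => cos (b * exp x + m * exp (al * x) + th)) 0 Rr)
    <= 16 / (m * al * (al - 1)) + 2.
Proof.
  intros Hal HK HR.
  set (dphi := fun x => b * exp x + m * al * exp (al * x)).
  set (ddphi := fun x => b * exp x + m * (al * al) * exp (al * x)).
  destruct (sign_change_at_exp_affine dphi b (m * al) (al - 1) 0 Rr) as [x0 Hx0];
    [lra | lra | intros; unfold dphi; rewrite exp_mul_split; ring |].
  destruct (sign_change_at_exp_affine ddphi b (m * (al * al)) (al - 1) 0 Rr) as [x3 Hx3];
    [nra | lra | intros; unfold ddphi; rewrite exp_mul_split; ring |].
  apply (abs_RInt_cos_phase_le _ dphi ddphi) with (x0 := x0) (x3 := x3); auto.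
  - intros x; unfold dphi; auto_derive; auto; ring.
  - intros x; unfold dphi, ddphi; auto_derive; auto; ring.
  - intros x; apply (ex_derive_continuous (K := R_AbsRing) (V := R_NormedModule)); unfold ddphi; auto_derive; auto.
  - intros x Hx; unfold dphi, ddphi.
    assert (1 <= exp (al * x)) by (rewrite <- exp_0; apply exp_le_compat; nra).
    nra.
Qed.

Lemma abs_RInt_cos_exp_phase_unit_le al b s th Rr :
  0 < al -> al <> 1 -> (s = 1 \/ s = -1) -> 0 < Rr ->
  Rabs (RInt (fun x => cos (b * exp x + s * exp (al * x) + th)) 0 Rr)
    <= 16 / (al * Rabs (al - 1)) + 2.
Proof.
  intros Hal Hal1 Hs HR.
  assert (Hgap : s * al * (al - 1) = al * Rabs (al - 1) \/
                 - s * al * (al - 1) = al * Rabs (al - 1)).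
  { destruct (Rlt_or_le 1 al);
      [rewrite Rabs_pos_eq | rewrite Rabs_left]; destruct Hs; subst; lra. }
  assert (0 < al * Rabs (al - 1))
    by (apply Rmult_lt_0_compat; [lra | apply Rabs_pos_lt; lra]).
  destruct Hgap as [Hgap | Hgap]; rewrite <- Hgap.
  - apply abs_RInt_cos_exp_phase_le; lra.
  - rewrite (RInt_ext _ (fun x => cos (- b * exp x + - s * exp (al * x) + - th)))
      by (intros; rewrite <- cos_neg; f_equal; ring).
    apply abs_RInt_cos_exp_phase_le; lra.
Qed.

Lemma RInt_pair (f g : R -> R) a c :
  ex_RInt f a c -> ex_RInt g a c ->
  @RInt C_R_CompleteNormedModule (fun x => (f x, g x)) a c = (RInt f a c, RInt g a c).
Proof.
  intros Hf Hg; apply (is_RInt_unique (V := C_R_CompleteNormedModule)).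
  apply (is_RInt_fct_extend_pair (U := R_NormedModule) (V := R_NormedModule));
    apply (RInt_correct (V := R_CompleteNormedModule)); assumption.
Qed.

Theorem lemma3 (alpha : R) (Halpha : 0 < alpha) (Halpha1 : alpha <> 1) :
  exists Cst : R, forall (Rr b s : R), 0 < Rr -> (s = 1 \/ s = -1) ->
    Cmod (@RInt C_R_CompleteNormedModule (fun x : R => cis (b * exp x + s * exp (alpha * x))) 0 Rr) <= Cst.
Proof.
  set (M := 16 / (alpha * Rabs (alpha - 1)) + 2).
  exists (2 * M); intros Rr b s HR Hs.
  unfold cis; rewrite RInt_pair;
    try (apply (ex_RInt_continuous (V := R_CompleteNormedModule)); intros;
         apply (ex_derive_continuous (K := R_AbsRing) (V := R_NormedModule)); auto_derive; auto).
  eapply Rle_trans; [apply Cmod_2Rmax|]; simpl.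
  set (Ic := RInt (fun x => cos (b * exp x + s * exp (alpha * x))) 0 Rr).
  set (Is := RInt (fun x => sin (b * exp x + s * exp (alpha * x))) 0 Rr).
  assert (Hcos : Rabs Ic <= M).
  { unfold Ic; rewrite (RInt_ext _ (fun x => cos (b * exp x + s * exp (alpha * x) + 0)))
      by (intros; rewrite Rplus_0_r; reflexivity).
    apply abs_RInt_cos_exp_phase_unit_le; auto. }
  assert (Hsin : Rabs Is <= M).
  { unfold Is; rewrite (RInt_ext _ (fun x => cos (b * exp x + s * exp (alpha * x) + - (PI / 2))))
      by (intros; rewrite cos_plus, cos_neg, sin_neg, cos_PI2, sin_PI2; lra).
    apply abs_RInt_cos_exp_phase_unit_le; auto. }
  assert (Hmax : 0 <= Rmax (Rabs Ic) (Rabs Is) <= M)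
    by (split; [eapply Rle_trans; [apply Rabs_pos | apply Rmax_l] | apply Rmax_lub; auto]).
  assert (Hsqrt2 : 0 <= sqrt 2 <= 2)
    by (split; [apply sqrt_pos | rewrite <- (sqrt_square 2) at 2 by lra; apply sqrt_le_1_alt; lra]).
  nra.
Qed.
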